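(* The space $\ell_1$ fails the $\mathbf{L}_{p,p}$-nu.
   Context: For a Banach space $X$: $\Pi(X)=\{(x,x^* )\in S_X\times S_{X^*}: x^*(x)=1\}$; for $T\in\mathcal{L}(X)$ (bounded linear operators on $X$), $v(T)=\sup\{|x^*(Tx)|:(x,x^* )\in\Pi(X)\}$. $X$ has the $\mathbf{L}_{p,p}$-nu if for every $\varepsilon>0$ and $(x,x^* )\in\Pi(X)$ there is $\eta(\varepsilon,(x,x^* ))>0$ such that whenever $T\in\mathcal{L}(X)$ with $v(T)=1$ satisfies $|x^*(Tx)|>1-\eta(\varepsilon,(x,x^* ))$, there is $S\in\mathcal{L}(X)$ with $v(S)=1$, $|x^*(Sx)|=1$ and $\|S-T\|<\varepsilon$. *)

From Stdlib Require Import Reals.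
From Coquelicot Require Import Coquelicot.
Open Scope R_scope.

Definition seqR := nat -> R.

Definition in_l1 (x : seqR) : Prop := ex_series (fun n => Rabs (x n)).
Definition norm1 (x : seqR) : R := Series (fun n => Rabs (x n)).

Definition seq_add (x y : seqR) : seqR := fun n => x n + y n.
Definition seq_scal (a : R) (x : seqR) : seqR := fun n => a * x n.

(** Bounded linear functionals on ell_1 (elements of the dual X^* ).
    Only their values on ell_1 matter. *)
Definition lin_functional (f : seqR -> R) : Prop :=
  forall a b x y, in_l1 x -> in_l1 y ->
    f (seq_add (seq_scal a x) (seq_scal b y)) = a * f x + b * f y.

Definition bounded_functional (f : seqR -> R) : Prop :=
  lin_functional f /\
  exists C : R, forall x, in_l1 x -> Rabs (f x) <= C * norm1 x.

Definition dual_norm (f : seqR -> R) : Rbar :=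
  Lub_Rbar (fun r => exists x, in_l1 x /\ norm1 x <= 1 /\ r = Rabs (f x)).

Definition bounded_operator (T : seqR -> seqR) : Prop :=
  (forall x, in_l1 x -> in_l1 (T x)) /\
  (forall a b x y, in_l1 x -> in_l1 y ->
     forall n, T (seq_add (seq_scal a x) (seq_scal b y)) n = a * T x n + b * T y n) /\
  exists C : R, forall x, in_l1 x -> norm1 (T x) <= C * norm1 x.

Definition op_norm (T : seqR -> seqR) : Rbar :=
  Lub_Rbar (fun r => exists x, in_l1 x /\ norm1 x <= 1 /\ r = norm1 (T x)).

Definition op_sub (S T : seqR -> seqR) : seqR -> seqR :=
  fun x n => S x n - T x n.

Definition Pi (x : seqR) (f : seqR -> R) : Prop :=
  in_l1 x /\ norm1 x = 1 /\
  bounded_functional f /\ dual_norm f = Finite 1 /\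
  f x = 1.

Definition num_radius (T : seqR -> seqR) : Rbar :=
  Lub_Rbar (fun r => exists x f, Pi x f /\ r = Rabs (f (T x))).

Definition Lppnu_l1 : Prop :=
  forall (eps : R), 0 < eps ->
  forall (x : seqR) (f : seqR -> R), Pi x f ->
  exists eta : R, 0 < eta /\
    forall T : seqR -> seqR,
      bounded_operator T -> num_radius T = Finite 1 ->
      Rabs (f (T x)) > 1 - eta ->
      exists S : seqR -> seqR,
        bounded_operator S /\ num_radius S = Finite 1 /\
        Rabs (f (S x)) = 1 /\
        Rbar_lt (op_norm (op_sub S T)) (Finite eps).

From Stdlib Require Import Reals.
From Coquelicot Require Import Coquelicot.
From Stdlib Require Import Lra Lia FunctionalExtensionality.
Open Scope R_scope.

(** Take x = (1/2, 1/4, 1/8, ...) and the summing functional f(y) = sum_n y n;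
    every nonnegative y of sum 1 gives (y, f) in Pi(ell_1).

    - Rigidity: if v(S) = 1 then |f(S y)| <= 1 for each such y.  Since x is
      a proper convex combination of e_k and of another nonnegative vector of
      sum 1, |f(S x)| = 1 forces f(S e_k) = f(S x) for EVERY unit vector e_k.
    - The operators T_N, which flip the sign of the coordinates >= N, are
      isometries with v(T_N) = 1, and f(T_N x) = 1 - 2^(1-N) -> 1.
    - If S is as above, then f((S - T_N) e_k) = f(S x) -+ 1 for k < N
      resp. k >= N; one of these has modulus 2, so ||S - T_N|| >= 2.

    Hence with eps = 1 no eta works at (x, f): T_N with 2^(1-N) < eta
    satisfies |f(T_N x)| > 1 - eta but is at distance >= 2 from every S
    with v(S) = 1 and |f(S x)| = 1. *)

Lemma in_l1_lincomb (u v : seqR) (c d : R) :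
  in_l1 u -> in_l1 v -> in_l1 (fun n => c * u n + d * v n).
Proof.
  unfold in_l1; intros Hu Hv.
  apply (@ex_series_le R_AbsRing R_CompleteNormedModule _
           (fun n => Rabs c * Rabs (u n) + Rabs d * Rabs (v n))).
  - intros n. change (norm (Rabs (c * u n + d * v n)))
      with (Rabs (Rabs (c * u n + d * v n))).
    rewrite Rabs_Rabsolu, <- !Rabs_mult. apply Rabs_triang.
  - exact (ex_series_plus _ _ (ex_series_scal_l (Rabs c) _ Hu) (ex_series_scal_l (Rabs d) _ Hv)).
Qed.

Lemma Series_lincomb (u v : seqR) (c d : R) : in_l1 u -> in_l1 v ->
  Series (fun n => c * u n + d * v n) = c * Series u + d * Series v.
Proof.
  intros Hu Hv. apply ex_series_Rabs in Hu. apply ex_series_Rabs in Hv.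
  rewrite Series_plus, !Series_scal_l; trivial.
  - exact (ex_series_scal_l c _ Hu).
  - exact (ex_series_scal_l d _ Hv).
Qed.

Lemma is_series_zero : is_series (fun _ : nat => 0) 0.
Proof.
  assert (H := is_series_scal_l 0 _ _ (is_series_geom (1/2) ltac:(rewrite Rabs_pos_eq; lra))).
  rewrite Rmult_0_l in H.
  eapply is_series_ext; [|exact H]. intros n. apply Rmult_0_l.
Qed.

Lemma sum_n_zero (a : nat -> R) (m : nat) :
  (forall i, (i <= m)%nat -> a i = 0) -> sum_n a m = 0.
Proof.
  induction m as [|m IH]; intros H.
  - rewrite sum_O. apply H. lia.
  - rewrite sum_Sn, IH, (H (S m)) by (lia || (intros; apply H; lia)).
    change (0 + 0 = 0). ring.
Qed.

Lemma Lub_Rbar_eq_1 (E : R -> Prop) :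
  (forall r, E r -> r <= 1) -> E 1 -> Lub_Rbar E = Finite 1.
Proof.
  intros Hub H1. apply is_lub_Rbar_unique. split.
  - intros r Hr. exact (Hub r Hr).
  - intros b Hb. exact (Hb 1 H1).
Qed.

Lemma Lub_Rbar_ge (E : R -> Prop) (r : R) : E r -> Rbar_le (Finite r) (Lub_Rbar E).
Proof. intros H. exact (proj1 (Lub_Rbar_correct E) r H). Qed.

Lemma Lub_Rbar_1_bound (E : R -> Prop) (r : R) : Lub_Rbar E = Finite 1 -> E r -> r <= 1.
Proof. intros H Hr. pose proof (Lub_Rbar_ge E r Hr) as K. rewrite H in K. exact K. Qed.

Definition sum_fun (y : seqR) : R := Series y.

Lemma sum_fun_le_norm1 (y : seqR) : in_l1 y -> Rabs (sum_fun y) <= norm1 y.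
Proof. exact (Series_Rabs y). Qed.

Definition prob_vector (z : seqR) : Prop := (forall n, 0 <= z n) /\ is_series z 1.

Lemma prob_vector_sphere (z : seqR) : prob_vector z -> in_l1 z /\ norm1 z = 1.
Proof.
  intros [Hp Hs].
  assert (Habs : forall n, Rabs (z n) = z n) by (intros n; apply Rabs_pos_eq, Hp).
  split.
  - exists 1. eapply is_series_ext; [|exact Hs]. intros n; now rewrite Habs.
  - unfold norm1. rewrite (Series_ext _ z Habs). exact (is_series_unique _ _ Hs).
Qed.

Lemma sum_fun_prob (z : seqR) : prob_vector z -> sum_fun z = 1.
Proof. intros [_ Hs]. exact (is_series_unique _ _ Hs). Qed.

Lemma Pi_prob_sum (z : seqR) : prob_vector z -> Pi z sum_fun.
Proof.
  intros Hz. destruct (prob_vector_sphere z Hz) as [Hl Hn].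
  assert (Hf := sum_fun_prob z Hz).
  repeat split; trivial.
  - intros a b x y Hx Hy. exact (Series_lincomb x y a b Hx Hy).
  - exists 1. intros x Hx. rewrite Rmult_1_l. exact (sum_fun_le_norm1 x Hx).
  - apply Lub_Rbar_eq_1.
    + intros r [x [Hx [Hnx ->]]]. eapply Rle_trans; [exact (sum_fun_le_norm1 x Hx)|exact Hnx].
    + exists z. rewrite Hf, Rabs_R1. repeat split; trivial. lra.
Qed.

Lemma Pi_functional_le (z w : seqR) (g : seqR -> R) :
  Pi z g -> in_l1 w -> norm1 w <= 1 -> Rabs (g w) <= 1.
Proof.
  intros (_ & _ & _ & Hd & _) Hw Hn.
  apply (Lub_Rbar_1_bound _ _ Hd). exists w. auto.
Qed.

Lemma radius_1_prob (S : seqR -> seqR) (z : seqR) :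
  num_radius S = Finite 1 -> prob_vector z -> Rabs (sum_fun (S z)) <= 1.
Proof.
  intros Hv Hz. apply (Lub_Rbar_1_bound _ _ Hv). exists z, sum_fun.
  split; [exact (Pi_prob_sum z Hz)|reflexivity].
Qed.

Definition geom : seqR := fun n => (1/2) ^ (S n).

Lemma geom_pos (n : nat) : 0 < geom n.
Proof. apply pow_lt. lra. Qed.

Lemma geom_lt_1 (k : nat) : geom k < 1.
Proof. apply (pow_lt_1_compat (1/2) (S k)); [lra|lia]. Qed.

Lemma geom_series : is_series geom 1.
Proof.
  assert (H := is_series_scal_l (1/2) _ _ (is_series_geom (1/2) ltac:(rewrite Rabs_pos_eq; lra))).
  replace 1 with (1/2 * / (1 - 1/2)) by field.
  eapply is_series_ext; [|exact H]. reflexivity.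
Qed.

Lemma geom_prob : prob_vector geom.
Proof. split; [intros n; apply Rlt_le, geom_pos|exact geom_series]. Qed.

Definition unit (k : nat) : seqR := fun n => if Nat.eqb n k then 1 else 0.

Lemma unit_series (k : nat) : is_series (unit k) 1.
Proof.
  apply (is_series_decr_n _ (S k)); [lia|]. simpl pred.
  assert (Hs : sum_n (unit k) k = 1).
  { destruct k as [|k].
    - rewrite sum_O. reflexivity.
    - rewrite sum_Sn, sum_n_zero.
      + unfold unit. rewrite Nat.eqb_refl. change (0 + 1 = 1). ring.
      + intros i Hi. unfold unit. destruct (Nat.eqb_spec i (S k)); [lia|reflexivity]. }
  match goal with |- is_series _ ?l => replace l with 0 end.
  2: { change (0 = 1 + - sum_n (unit k) k). rewrite Hs. ring. }
  eapply is_series_ext; [|exact is_series_zero]. intros n. unfold unit.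
  destruct (Nat.eqb_spec (S k + n) k); [lia|reflexivity].
Qed.

Lemma unit_prob (k : nat) : prob_vector (unit k).
Proof.
  split; [|exact (unit_series k)].
  intros n. unfold unit. destruct (Nat.eqb n k); lra.
Qed.

Definition geom_compl (k : nat) : seqR :=
  fun n => (geom n - geom k * unit k n) / (1 - geom k).

Lemma geom_compl_prob (k : nat) : prob_vector (geom_compl k).
Proof.
  assert (Hlt := geom_lt_1 k). split.
  - intros n. unfold geom_compl. apply Rmult_le_pos; [|apply Rlt_le, Rinv_0_lt_compat; lra].
    unfold unit. destruct (Nat.eqb_spec n k) as [->|_]; [lra|].
    pose proof (geom_pos n). lra.
  - assert (Hsum := is_series_plus _ _ _ _
      (is_series_scal_l (/ (1 - geom k)) _ _ geom_series)
      (is_series_scal_l (- geom k / (1 - geom k)) _ _ (unit_series k))).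
    replace 1 with (/ (1 - geom k) * 1 + - geom k / (1 - geom k) * 1) by (field; lra).
    eapply is_series_ext; [|exact Hsum].
    intros n. unfold geom_compl. change (/ (1 - geom k) * geom n + - geom k / (1 - geom k) * unit k n
      = (geom n - geom k * unit k n) / (1 - geom k)). field. lra.
Qed.

Lemma geom_split (k : nat) :
  geom = seq_add (seq_scal (geom k) (unit k)) (seq_scal (1 - geom k) (geom_compl k)).
Proof.
  apply functional_extensionality. intros n. unfold seq_add, seq_scal, geom_compl.
  assert (Hlt := geom_lt_1 k). field. lra.
Qed.

Lemma extreme_point_interval (t a b : R) :
  0 < t < 1 -> Rabs a <= 1 -> Rabs b <= 1 -> Rabs (t * a + (1 - t) * b) = 1 ->
  a = t * a + (1 - t) * b.
Proof.
  intros Ht Ha Hb Hs.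
  apply Rabs_le_between in Ha. apply Rabs_le_between in Hb.
  destruct (Rcase_abs (t * a + (1 - t) * b)).
  - rewrite Rabs_left in Hs by lra. nra.
  - rewrite Rabs_pos_eq in Hs by lra. nra.
Qed.

Lemma sum_fun_unit_image (S : seqR -> seqR) (k : nat) :
  bounded_operator S -> num_radius S = Finite 1 ->
  Rabs (sum_fun (S geom)) = 1 -> sum_fun (S (unit k)) = sum_fun (S geom).
Proof.
  intros (HSl1 & HSlin & _) Hv Habs.
  assert (Hl := proj1 (prob_vector_sphere _ (unit_prob k))).
  assert (Hly := proj1 (prob_vector_sphere _ (geom_compl_prob k))).
  assert (Hdecomp : sum_fun (S geom)
            = geom k * sum_fun (S (unit k)) + (1 - geom k) * sum_fun (S (geom_compl k))).
  { rewrite (geom_split k) at 1. unfold sum_fun.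
    rewrite (Series_ext _ (fun n => geom k * S (unit k) n + (1 - geom k) * S (geom_compl k) n))
      by (intros n; apply HSlin; trivial).
    apply Series_lincomb; apply HSl1; trivial. }
  rewrite Hdecomp in *.
  apply extreme_point_interval; trivial.
  - split; [apply geom_pos|apply geom_lt_1].
  - exact (radius_1_prob S _ Hv (unit_prob k)).
  - exact (radius_1_prob S _ Hv (geom_compl_prob k)).
Qed.

Definition flip (N : nat) : seqR -> seqR :=
  fun y n => if Nat.ltb n N then y n else - y n.

Lemma flip_isometry (N : nat) (y : seqR) :
  in_l1 y -> in_l1 (flip N y) /\ norm1 (flip N y) = norm1 y.
Proof.
  assert (Habs : forall n, Rabs (flip N y n) = Rabs (y n)).
  { intros n. unfold flip. destruct (Nat.ltb n N); [reflexivity|apply Rabs_Ropp]. }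
  intros [l Hl]. split.
  - exists l. eapply is_series_ext; [|exact Hl]. intros n; now rewrite Habs.
  - exact (Series_ext _ _ Habs).
Qed.

Lemma flip_bounded (N : nat) : bounded_operator (flip N).
Proof.
  repeat split.
  - intros x Hx. exact (proj1 (flip_isometry N x Hx)).
  - intros a b x y _ _ n. unfold flip, seq_add, seq_scal. destruct (Nat.ltb n N); lra.
  - exists 1. intros x Hx. rewrite (proj2 (flip_isometry N x Hx)). lra.
Qed.

Lemma flip_unit (N k : nat) :
  flip N (unit k) = seq_scal (if Nat.ltb k N then 1 else -1) (unit k).
Proof.
  apply functional_extensionality. intros n. unfold flip, unit, seq_scal.
  destruct (Nat.eqb_spec n k) as [->|_];
    [destruct (Nat.ltb k N)|destruct (Nat.ltb n N), (Nat.ltb k N)]; lra.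
Qed.

(** v(T_N) = 1: T_N is an isometry, and |f(T_N e_0)| = 1. *)
Lemma flip_radius (N : nat) : num_radius (flip N) = Finite 1.
Proof.
  apply Lub_Rbar_eq_1.
  - intros r [x [g [Hpi ->]]]. pose proof Hpi as (Hx & Hn & _).
    destruct (flip_isometry N x Hx) as [Hl Hnorm].
    apply (Pi_functional_le x _ g Hpi Hl). lra.
  - exists (unit 0), sum_fun. split; [exact (Pi_prob_sum _ (unit_prob 0))|].
    rewrite flip_unit. unfold seq_scal, sum_fun. rewrite Series_scal_l.
    change (1 = Rabs ((if Nat.ltb 0 N then 1 else -1) * sum_fun (unit 0))).
    rewrite (sum_fun_prob _ (unit_prob 0)), Rmult_1_r.
    destruct (Nat.ltb 0 N); [rewrite Rabs_R1|rewrite Rabs_m1]; reflexivity.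
Qed.

Lemma flip_geom_series (N : nat) : (1 <= N)%nat -> is_series (flip N geom) (1 - 2 * (1/2)^N).
Proof.
  intros HN.
  set (tail := fun n => if Nat.ltb n N then 0 else geom n).
  assert (Htail : is_series tail ((1/2)^N)).
  { apply (is_series_decr_n _ N); [lia|].
    assert (Hs : sum_n tail (pred N) = 0).
    { apply sum_n_zero. intros i Hi. unfold tail. destruct (Nat.ltb_spec i N); [reflexivity|lia]. }
    match goal with |- is_series _ ?l => replace l with ((1/2)^N * 1) end.
    2: { change ((1/2)^N * 1 = (1/2)^N + - sum_n tail (pred N)). rewrite Hs. ring. }
    eapply is_series_ext; [|exact (is_series_scal_l _ _ _ geom_series)].
    intros n. unfold tail. destruct (Nat.ltb_spec (N + n) N); [lia|].
    unfold geom. rewrite <- Nat.add_succ_r, pow_add. reflexivity. }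
  replace (1 - 2 * (1/2)^N) with (1 * 1 + -2 * (1/2)^N) by ring.
  eapply is_series_ext;
    [|exact (is_series_plus _ _ _ _ (is_series_scal_l 1 _ _ geom_series)
               (is_series_scal_l (-2) _ _ Htail))].
  intros n. change (1 * geom n + -2 * tail n = flip N geom n).
  unfold flip, tail. destruct (Nat.ltb n N); ring.
Qed.

Lemma flip_nearly_attains (eta : R) : 0 < eta ->
  exists N, (1 <= N)%nat /\ Rabs (sum_fun (flip N geom)) > 1 - eta.
Proof.
  intros Heta.
  destruct (pow_lt_1_zero (1/2)) with (y := eta / 2) as [N0 HN0];
    [rewrite Rabs_pos_eq; lra|lra|].
  exists (S N0). split; [lia|].
  specialize (HN0 (S N0) ltac:(lia)).
  rewrite Rabs_pos_eq in HN0 by (apply pow_le; lra).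
  unfold sum_fun. rewrite (is_series_unique _ _ (flip_geom_series (S N0) ltac:(lia))).
  eapply Rlt_le_trans; [|apply Rle_abs]. lra.
Qed.

Lemma op_norm_ge_unit (D : seqR -> seqR) (k : nat) :
  in_l1 (D (unit k)) -> Rbar_le (Finite (Rabs (sum_fun (D (unit k))))) (op_norm D).
Proof.
  intros Hl. destruct (prob_vector_sphere _ (unit_prob k)) as [Hu Hn].
  eapply Rbar_le_trans; [|apply Lub_Rbar_ge; exists (unit k); repeat split; eauto; lra].
  exact (sum_fun_le_norm1 _ Hl).
Qed.

(** Every S with v(S) = 1 and |f(S x)| = 1 is at distance >= 2 from T_N:
    for the unit vector e_k whose flip sign is -f(S x) (k = 0 or k = N),
    f((S - T_N) e_k) = 2 f(S x). *)
Lemma far_from_flip (S : seqR -> seqR) (N : nat) : (1 <= N)%nat ->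
  bounded_operator S -> num_radius S = Finite 1 -> Rabs (sum_fun (S geom)) = 1 ->
  Rbar_le (Finite 2) (op_norm (op_sub S (flip N))).
Proof.
  intros HN HS Hv Habs.
  assert (Hk : exists k, (if Nat.ltb k N then 1 else -1) = - sum_fun (S geom)).
  { destruct (Rcase_abs (sum_fun (S geom))).
    - exists 0%nat. replace (Nat.ltb 0 N) with true by (symmetry; apply Nat.ltb_lt; lia).
      rewrite Rabs_left in Habs; lra.
    - exists N. rewrite Nat.ltb_irrefl. rewrite Rabs_pos_eq in Habs; lra. }
  destruct Hk as [k Hk]. set (sgn := if Nat.ltb k N then 1 else -1) in Hk.
  assert (Hdiff : op_sub S (flip N) (unit k) = fun n => 1 * S (unit k) n + (- sgn) * unit k n).
  { apply functional_extensionality; intros n.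
    unfold op_sub. rewrite flip_unit. unfold seq_scal, sgn. ring. }
  assert (Hu := proj1 (prob_vector_sphere _ (unit_prob k))).
  assert (HSu : in_l1 (S (unit k))) by (apply (proj1 HS); exact Hu).
  assert (Hl : in_l1 (op_sub S (flip N) (unit k)))
    by (rewrite Hdiff; apply in_l1_lincomb; trivial).
  eapply Rbar_le_trans; [|exact (op_norm_ge_unit _ k Hl)].
  simpl. rewrite Hdiff. unfold sum_fun at 1. rewrite Series_lincomb by trivial.
  change (2 <= Rabs (1 * sum_fun (S (unit k)) + - sgn * sum_fun (unit k))).
  rewrite (sum_fun_unit_image S k HS Hv Habs), (sum_fun_prob _ (unit_prob k)), Hk.
  replace (1 * sum_fun (S geom) + - - sum_fun (S geom) * 1) with (2 * sum_fun (S geom)) by ring.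
  rewrite Rabs_mult, Habs, Rabs_pos_eq; lra.
Qed.

Theorem mainTheorem12 : ~ Lppnu_l1.
Proof.
  intros Hnu.
  destruct (Hnu 1 Rlt_0_1 geom sum_fun (Pi_prob_sum _ geom_prob)) as [eta [Heta Hclose]].
  destruct (flip_nearly_attains eta Heta) as [N [HN Hnear]].
  destruct (Hclose (flip N) (flip_bounded N) (flip_radius N) Hnear)
    as [S [HS [Hv [Hattain Hdist]]]].
  apply (Rbar_lt_not_le _ _ Hdist).
  eapply Rbar_le_trans; [|exact (far_from_flip S N HN HS Hv Hattain)].
  simpl. lra.
Qed.
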